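(* Let $d\ge 2$ and $n\ge 2d$ be integers. Suppose $\mathcal{H}\subseteq\binom{[n]}{d}$ is an intersecting family (any two members intersect) with $|\mathcal{H}|\ge 6n^{d-2}$. Then there exist an element $\ell\in[n]$ and sets $A_1,\dots,A_{d+1}\in\mathcal{H}$ such that (1) $\ell\in A$ for all $A\in\mathcal{H}$, and (2) the sets $A_1\setminus\{\ell\},\dots,A_{d+1}\setminus\{\ell\}$ are pairwise disjoint.
   Context: $\binom{[n]}{d}$ denotes the family of all $d$-element subsets of $[n]$. *)

From mathcomp Require Import all_boot.
Set Implicit Arguments. Unset Strict Implicit. Unset Printing Implicit Defensive.

Definition uniform (n d : nat) (H : {set {set 'I_n}}) : Prop :=
  forall A, A \in H -> #|A| = d.

Definition intersecting (n : nat) (H : {set {set 'I_n}}) : Prop :=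
  forall A B, A \in H -> B \in H -> A :&: B != set0.

From mathcomp Require Import all_boot zify.
Set Implicit Arguments. Unset Strict Implicit. Unset Printing Implicit Defensive.

(* Branching count: if no set of fewer than t points meets every member of an
   intersecting d-uniform family H, then at most d^(t-|S|) C(n-t, d-t) members
   contain a given S with |S| <= t, since some member avoids S and every member
   containing S meets it in one of its d points.  Members of H are themselves
   transversals, so above 6 n^(d-2) members H must have a transversal point l.
   A maximal subfamily with pairwise disjoint traces B \ l either has d+1
   members, or the union of its traces (at most d(d-1) points) meets every
   trace, forcing |H| <= d(d-1) C(n-2, d-2) < 6 n^(d-2). *)


Lemma bin_fact_leq_exp m k : 'C(m, k) * k`! <= m ^ k.
Proof.
rewrite bin_ffact; elim: k m => [|k IHk] m //.
rewrite ffactnS expnS leq_mul2l (leq_trans (IHk _)) ?orbT //.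
by case: k {IHk} => [|k]; rewrite // leq_exp2r // leq_pred.
Qed.

Lemma mul_add2_add1_leq_fact k : 0 < k -> (k + 2) * (k + 1) <= 6 * k`!.
Proof.
elim: k => [//|[|k] IHk] _ //.
by have := IHk isT; rewrite [k.+2`!]factS; nia.
Qed.

Lemma sq_add3_leq_fact k : 3 <= k -> (k + 3) ^ 2 <= 12 * k`!.
Proof.
elim: k => [//|k IHk] k3; have [k2 | k3'] := leqP k 2.
  by have -> : k = 2 by lia.
by have := IHk k3'; rewrite [k.+1`!]factS; nia.
Qed.

Lemma ltn_bin_sub2 d n :
  2 <= d -> 0 < n -> d * (d - 1) * 'C(n - 2, d - 2) < 6 * n ^ (d - 2).
Proof.
move=> d2 n0; have [k -> {d d2}] : exists k, d = k + 2 by exists (d - 2); lia.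
rewrite addnK (_ : k + 2 - 1 = k + 1); last by lia.
have [-> | k0] := posnP k; first by rewrite bin0.
apply: leq_ltn_trans (leq_mul (mul_add2_add1_leq_fact k0) (leqnn _)) _.
rewrite -mulnA (mulnC k`!) ltn_pmul2l //.
by apply: leq_ltn_trans (bin_fact_leq_exp _ _) _; rewrite ltn_exp2r //; lia.
Qed.

Lemma ltn_double_bin_sub2 d n :
  2 <= d -> 0 < n -> 2 * d * 'C(n - 2, d - 2) < 6 * n ^ (d - 2).
Proof.
move=> d2 n0; have [-> | d3] := eqVneq d 2; first by rewrite bin0.
apply: leq_ltn_trans (ltn_bin_sub2 d2 n0); rewrite leq_mul2r mulnC leq_mul2l.
by apply/orP; right; apply/orP; right; lia.
Qed.

Lemma exp_fact_add3 k m :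
  2 * k + 3 <= m -> (k + 3) ^ 3 * m ^ k < 6 * k`! * (m + 3) ^ k.+1.
Proof.
move=> km; have [k3 | k2] := leqP 3 k; last first.
  by case: k k2 km => [|[|[|k]]] //= _ km; rewrite !expnS !expn0 ?factS ?fact0; nia.
have lt_exp : m ^ k < (m + 3) ^ k by rewrite ltn_exp2r //; lia.
have sq := sq_add3_leq_fact k3; rewrite !expnS !expn0 !muln1 in sq *.
have le_cube : (k + 3) * ((k + 3) * (k + 3)) <= 6 * k`! * (m + 3) by nia.
by apply: leq_ltn_trans (leq_mul le_cube (leqnn _)) _; rewrite mulnA ltn_pmul2l //; nia.
Qed.

Lemma ltn_cube_bin_sub3 d n :
  3 <= d -> 2 * d <= n -> d ^ 3 * 'C(n - 3, d - 3) < 6 * n ^ (d - 2).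
Proof.
move=> d3 dn; have [k def_d] : exists k, d = k + 3 by exists (d - 3); lia.
have [m def_n] : exists m, n = m + 3 by exists (n - 3); lia.
rewrite def_d def_n !addnK (_ : k + 3 - 2 = k.+1); last by lia.
have key := @exp_fact_add3 k m (ltac:(lia)).
rewrite -(ltn_pmul2r (fact_gt0 k)) -mulnA (mulnAC 6).
by apply: leq_ltn_trans key; rewrite leq_mul2l bin_fact_leq_exp orbT.
Qed.

Lemma card_bigcup_leq (I T : finType) (P : pred I) (F : I -> {set T}) :
  #|\bigcup_(i | P i) F i| <= \sum_(i | P i) #|F i|.
Proof.
elim/big_rec2: _ => [|i m U _ le_U]; first by rewrite cards0.
by rewrite (leq_trans (leq_card_setU _ _).1) ?leq_add2l.
Qed.

Section Supsets.

Variable T : finType.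
Implicit Types (H : {set {set T}}) (S C B : {set T}).

Definition supsets H S := [set B in H | S \subset B].

Definition transversal H C := [forall B in H, ~~ [disjoint C & B]].

Lemma supsets_id H S : {in H, forall B, S \subset B} -> supsets H S = H.
Proof.
move=> sSH; apply/setP => B; rewrite inE.
by case: (boolP (B \in H)) => // /sSH ->.
Qed.

Lemma card_supsets_transversal H S C :
  transversal H C -> #|supsets H S| <= \sum_(z in C) #|supsets H (z |: S)|.
Proof.
move=> /forall_inP tC; apply: leq_trans (card_bigcup_leq _ _).
apply/subset_leq_card/subsetP => B; rewrite inE => /andP[BH sSB].
have /set0Pn[z] : C :&: B != set0 by rewrite setI_eq0 tC.
rewrite inE => /andP[zC zB].
by apply/bigcupP; exists z; rewrite // inE BH subUset sub1set zB.
Qed.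

Variables (d : nat) (H : {set {set T}}).
Hypothesis uniformH : {in H, forall B, #|B| = d}.

Lemma card_supsets S : #|supsets H S| <= 'C(#|T| - #|S|, d - #|S|).
Proof.
have sub_inj : {in supsets H S &, injective (fun B => B :\: S)}.
  move=> B1 B2; rewrite !inE => /andP[_ sSB1] /andP[_ sSB2] eqB.
  by rewrite -(setID B1 S) -(setID B2 S) (setIidPr sSB1) (setIidPr sSB2) eqB.
have -> : #|T| - #|S| = #|~: S| by rewrite -(cardsC S) addKn.
rewrite -(card_in_imset sub_inj) -cards_draws.
apply/subset_leq_card/subsetP => X /imsetP[B + ->]; rewrite !inE => /andP[BH sSB].
by rewrite cardsD (setIidPr sSB) uniformH // setDE subsetIr eqxx.
Qed.

Lemma card_star_leq l (U : {set T}) :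
  {in H, forall B, l \in B} -> {in H, forall B, ~~ [disjoint U & B :\ l]} ->
  #|H| <= #|U| * 'C(#|T| - 2, d - 2).
Proof.
move=> lH tU; have tUl : transversal H (U :\ l).
  by apply/forall_inP => B BH; rewrite -setI_eq0 setDE setIAC -setIA -setDE setI_eq0 tU.
rewrite -{1}(@supsets_id H [set l]) => [|B BH]; last by rewrite sub1set lH.
apply: leq_trans (card_supsets_transversal [set l] tUl) _.
apply: leq_trans (leq_mul (subset_leq_card (subsetDl U [set l])) (leqnn _)).
rewrite -sum_nat_const; apply: leq_sum => u; rewrite !inE => /andP[ul _].
by apply: leq_trans (card_supsets _) _; rewrite cardsU1 cards1 inE ul.
Qed.

Hypothesis intersectingH : {in H &, forall A B, A :&: B != set0}.

Lemma transversal_mem C : C \in H -> transversal H C.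
Proof. by move=> CH; apply/forall_inP => B BH; rewrite -setI_eq0 intersectingH. Qed.

Lemma card_supsets_cover t S :
  (forall S', #|S'| < t -> ~~ transversal H S') -> #|S| <= t ->
  #|supsets H S| <= d ^ (t - #|S|) * 'C(#|T| - t, d - t).
Proof.
move=> tau; move def_k: (t - #|S|) => k; elim: k S def_k => [|k IHk] S def_k le_St.
  have eq_St : #|S| = t by lia.
  by rewrite -eq_St mul1n card_supsets.
have /forall_inPn[C CH /negbNE dis_SC] : ~~ transversal H S by apply: tau; lia.
apply: leq_trans (card_supsets_transversal S (transversal_mem CH)) _.
rewrite expnS -mulnA -{1}(uniformH CH) -sum_nat_const; apply: leq_sum => z zC.
by apply: IHk; rewrite cardsU1 (disjointFl dis_SC zC); lia.
Qed.

Lemma supsets0 : supsets H set0 = H.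
Proof. by apply: supsets_id => B; rewrite sub0set. Qed.

Lemma card_leq_transversal S :
  (forall S', #|S'| < 2 -> ~~ transversal H S') -> transversal H S ->
  #|H| <= #|S| * (d * 'C(#|T| - 2, d - 2)).
Proof.
move=> tau2 tS; rewrite -{1}supsets0.
apply: leq_trans (card_supsets_transversal set0 tS) _.
rewrite -sum_nat_const; apply: leq_sum => z _; rewrite setU0.
by have := card_supsets_cover tau2 (_ : #|[set z]| <= 2); rewrite cards1 expn1; apply.
Qed.

Lemma intersecting_star :
  2 <= d -> 2 * d <= #|T| -> 6 * #|T| ^ (d - 2) <= #|H| ->
  exists l, {in H, forall B, l \in B}.
Proof.
move=> d2 dn bigH.
have [A AH] : exists A, A \in H.
  by apply/card_gt0P; apply: leq_trans bigH; rewrite muln_gt0 expn_gt0; lia.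
have [/existsP[l /forall_inP tl] | no_star] := boolP [exists l, transversal H [set l]].
  by exists l => B /tl; rewrite disjoints1 negbK.
exfalso; move: bigH; rewrite leqNgt => /negP; apply.
have tau2 S : #|S| < 2 -> ~~ transversal H S.
  rewrite ltnS leq_eqVlt ltnS leqn0 cards_eq0 => /orP[/cards1P[l ->] | /eqP ->].
    exact: (existsPn no_star).
  by apply/forall_inPn; exists A; rewrite // negbK -setI_eq0 set0I.
have [/existsP[S /andP[S2 tS]] | no_tau2] :=
  boolP [exists S : {set T}, (#|S| <= 2) && transversal H S].
  apply: leq_ltn_trans (card_leq_transversal tau2 tS) _; rewrite mulnA.
  apply: leq_ltn_trans (ltn_double_bin_sub2 d2 (_ : 0 < #|T|)); last by lia.
  by rewrite leq_mul2r leq_mul2r S2 !orbT.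
have tau3 S : #|S| < 3 -> ~~ transversal H S.
  by move=> S3; have := existsPn no_tau2 S; rewrite -ltnS S3.
have d3 : 3 <= d.
  rewrite ltnNge; apply/negP => le_d2.
  have /negP[] : ~~ transversal H A by apply: tau3; rewrite (uniformH AH) ltnS.
  exact: transversal_mem.
rewrite -{1}supsets0; apply: leq_ltn_trans (card_supsets_cover tau3 _) _; rewrite cards0 //.
by rewrite subn0; apply: ltn_cube_bin_sub3.
Qed.

End Supsets.

Section DisjointImages.

Variables (T : finType) (f : {set T} -> {set T}).
Implicit Types (M H : {set {set T}}) (A B : {set T}).

Definition disjoint_images M :=
  [forall A in M, forall B in M, (A != B) ==> [disjoint f A & f B]].

Lemma disjoint_imagesP M :
  reflect {in M &, forall A B, A != B -> [disjoint f A & f B]} (disjoint_images M).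
Proof.
apply: (iffP forall_inP) => [dM A B AM BM | dM A AM].
  by move/forall_inP/(_ B BM)/implyP: (dM A AM).
by apply/forall_inP => B BM; apply/implyP; apply: dM.
Qed.

Lemma disjoint_imagesU1 M B :
  disjoint_images M -> {in M, forall A, [disjoint f B & f A]} ->
  disjoint_images (B |: M).
Proof.
move=> /disjoint_imagesP dM dB; apply/disjoint_imagesP.
move=> A1 A2 /setU1P[-> | A1M] /setU1P[-> | A2M]; rewrite ?eqxx // => neqA.
- exact: dB.
- by rewrite disjoint_sym; apply: dB.
- exact: dM.
Qed.

Lemma disjoint_images_enum M k :
  disjoint_images M -> k <= #|M| ->
  exists A : 'I_k -> {set T},
    (forall i, A i \in M) /\ (forall i j, i != j -> [disjoint f (A i) & f (A j)]).
Proof.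
move=> /disjoint_imagesP dM kM.
have lt_size (i : 'I_k) : i < size (enum M) by rewrite -cardE (leq_trans (ltn_ord i)).
have in_M (i : 'I_k) : nth set0 (enum M) i \in M by rewrite -mem_enum mem_nth.
exists (fun i => nth set0 (enum M) i); split=> // i j ij.
by apply: dM; rewrite ?nth_uniq ?enum_uniq.
Qed.

Lemma disjoint_images_or_transversal H k s :
  {in H, forall B, 0 < #|f B| <= s} ->
  (exists A : 'I_k.+1 -> {set T},
     (forall i, A i \in H) /\ (forall i j, i != j -> [disjoint f (A i) & f (A j)]))
  \/ (exists2 U : {set T}, #|U| <= k * s & {in H, forall B, ~~ [disjoint U & f B]}).
Proof.
move=> size_f; pose P M := (M \subset H) && disjoint_images M.
have P0 : P set0 by rewrite /P sub0set; apply/disjoint_imagesP => A B; rewrite inE.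
have [M /andP[sMH dM] maxM] := arg_maxnP (fun M => #|M|) P0.
have [kM | Mk] := ltnP k #|M|.
  have [A [AM dA]] := disjoint_images_enum dM kM.
  by left; exists A; split=> // i; apply: (subsetP sMH).
right; exists (\bigcup_(A in M) f A).
  apply: leq_trans (card_bigcup_leq _ _) (leq_trans _ (leq_mul Mk (leqnn s))).
  rewrite -sum_nat_const; apply: leq_sum => A AM.
  by case/andP: (size_f A (subsetP sMH A AM)).
move=> B BH; apply/negP => dis_UB; rewrite disjoint_sym in dis_UB.
have /andP[/card_gt0P[x fBx] _] := size_f B BH.
have BM : B \notin M.
  apply/negP => BM; move: (disjointFr dis_UB fBx).
  by move/bigcupP; apply; exists B.
have PBM : P (B |: M).
  rewrite /P subUset sub1set BH sMH disjoint_imagesU1 //.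
  exact/bigcup_disjointP.
have : #|B |: M| <= #|M| := maxM _ PBM.
by rewrite cardsU1 BM add1n ltnn.
Qed.

End DisjointImages.

Theorem lemma5p3 (d n : nat) (H : {set {set 'I_n}}) :
  2 <= d -> 2 * d <= n ->
  uniform d H -> intersecting H ->
  6 * n ^ (d - 2) <= #|H| ->
  exists (l : 'I_n) (A : 'I_d.+1 -> {set 'I_n}),
    (forall B, B \in H -> l \in B) /\
    (forall i, A i \in H) /\
    (forall i j, i != j -> [disjoint (A i :\ l) & (A j :\ l)]).
Proof.
move=> d2 dn uH iH bigH.
have [l lH] : exists l : 'I_n, {in H, forall B : {set 'I_n}, l \in B}.
  by apply: (intersecting_star uH iH d2); rewrite card_ord.
have size_trace B : B \in H -> 0 < #|B :\ l| <= d - 1.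
  move=> BH; have := cardsD1 l B; rewrite lH // (uH B BH) add1n => def_d.
  by rewrite def_d subn1 leqnn andbT -ltnS -def_d.
have [[A [AH dA]] | [U cardU tU]] := disjoint_images_or_transversal d size_trace.
  by exists l, A.
exfalso; move: bigH; rewrite leqNgt => /negP; apply.
apply: leq_ltn_trans (card_star_leq uH lH tU) _; rewrite card_ord.
apply: leq_ltn_trans (ltn_bin_sub2 d2 (_ : 0 < n)); last by lia.
by rewrite leq_mul2r cardU orbT.
Qed.
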